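(* Let $A$ be an irreducible $n\times n$ completely positive matrix with $\operatorname{rank}A=2$. Then $A$ has a unique CP factorization if and only if there exist indices $i\neq j$ with $a_{ij}=0$ such that the $i$-th row and the $j$-th column of $A$ are nonzero. If no such zero off-diagonal entry exists, then $A$ has infinitely many minimal CP factorizations.
   Context: A symmetric $n\times n$ matrix $A$ is completely positive if $A=BB^T$ for some entrywise nonnegative $n\times k$ matrix $B$; such an equality is a CP factorization of $A$. Only CP factorizations in which the columns of $B$ are pairwise linearly independent are considered, and two CP factorizations $A=BB^T=CC^T$ are considered equal if $C=BP$ for a permutation matrix $P$. The cp-rank of $A$ is the minimal number of columns of such a nonnegative $B$; a CP factorization with that many columns is called minimal. A symmetric matrix is irreducible if its graph (vertices $1,\dots,n$, with $\{i,j\}$, $i\ne j$, an edge iff $a_{ij}\neq0$) is connected. *)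

From HB Require Import structures.
From mathcomp Require Import all_boot all_order all_algebra.
From mathcomp Require Import reals.
Set Implicit Arguments. Unset Strict Implicit. Unset Printing Implicit Defensive.
Import Order.TTheory GRing.Theory Num.Theory.
Local Open Scope ring_scope.

Section CP.
Variable R : realType.

Definition nonneg_mx (n k : nat) (B : 'M[R]_(n, k)) : Prop :=
  forall i j, 0 <= B i j.

Definition completely_positive (n : nat) (A : 'M[R]_n) : Prop :=
  exists k (B : 'M[R]_(n, k)), nonneg_mx B /\ A = B *m B^T.

Definition pairwise_lin_indep_cols (n k : nat) (B : 'M[R]_(n, k)) : Prop :=
  forall j1 j2 : 'I_k, j1 != j2 ->
    forall a b : R, a *: col j1 B + b *: col j2 B = 0 -> a = 0 /\ b = 0.

Definition cp_factorization (n k : nat) (A : 'M[R]_n) (B : 'M[R]_(n, k)) : Prop :=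
  [/\ nonneg_mx B, A = B *m B^T & pairwise_lin_indep_cols B].

Definition cp_fact_eq (n k k' : nat) (B : 'M[R]_(n, k)) (C : 'M[R]_(n, k')) : Prop :=
  exists (e : k = k') (P : 'M[R]_k'),
    is_perm_mx P /\ C = castmx (erefl n, e) B *m P.

Definition unique_cp_factorization (n : nat) (A : 'M[R]_n) : Prop :=
  exists k (B : 'M[R]_(n, k)), cp_factorization A B /\
    forall k' (C : 'M[R]_(n, k')), cp_factorization A C -> cp_fact_eq B C.

(* minimal CP factorization: number of columns equals the cp-rank, i.e.
   no nonnegative factorization with fewer columns exists *)
Definition minimal_cp_factorization (n k : nat) (A : 'M[R]_n) (B : 'M[R]_(n, k)) : Prop :=
  cp_factorization A B /\
  forall k' (C : 'M[R]_(n, k')), (k' < k)%N -> nonneg_mx C -> A <> C *m C^T.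

Definition infinitely_many_minimal_cp (n : nat) (A : 'M[R]_n) : Prop :=
  exists k (f : nat -> 'M[R]_(n, k)),
    (forall m, minimal_cp_factorization A (f m)) /\
    (forall m1 m2, m1 <> m2 -> ~ cp_fact_eq (f m1) (f m2)).

Definition mx_graph (n : nat) (A : 'M[R]_n) : rel 'I_n :=
  fun i j => (i != j) && (A i j != 0).

Definition irreducible_mx (n : nat) (A : 'M[R]_n) : Prop :=
  forall i j : 'I_n, connect (mx_graph A) i j.

End CP.

From HB Require Import structures.
From mathcomp Require Import all_boot all_order all_algebra.
From mathcomp Require Import reals.
From mathcomp Require Import fingroup perm ring lra.
Import Order.TTheory GRing.Theory Num.Theory.
Local Open Scope ring_scope.

Set Implicit Arguments.
Unset Strict Implicit.
Unset Printing Implicit Defensive.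

(* Let A = B B^T be completely positive of rank 2 and pick rows p, q whose
   principal 2x2 minor d = a_pp a_qq - a_pq^2 is nonzero.  Every row m of A is
   x_m (row p) + y_m (row q) with Cramer coefficients x_m, y_m, and, because a
   Gram matrix determines the lengths of residuals, the same holds for the rows
   of ANY factor C with A = C C^T, i.e. C = [x y] M where M consists of rows
   p and q of C.  Conversely every 2x2 matrix L with L L^T equal to the minor
   lifts to the factor [x y] L, a CP factorization when everything is
   nonnegative.

   - If a_pq = 0 (with a_pp, a_qq > 0), the coefficients are nonnegative and
     rows p, q of C have disjoint supports; pairwise independence of columns
     then forces C to be [sqrt(a_pp) x, sqrt(a_qq) y] up to a permutation.
   - If all entries are positive, choose p, q with the smallest angle between
     rows of B.  Then x, y >= 0, and composing the Cholesky factor of the minor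
     with small rotations (rationally parametrized) gives infinitely many
     distinct factorizations with two columns, which is minimal as rank A = 2. *)

Section RankTwoCP.
Variable R : realType.

Lemma sum_ord2 (F : 'I_2 -> R) : \sum_(i < 2) F i = F 0 + F 1.
Proof. by rewrite big_ord_recl big_ord1; congr (_ + F _); apply: val_inj. Qed.

Lemma ord2P (k : 'I_2) : k = 0 \/ k = 1.
Proof. by case: k => [[|[|]]] // ?; [left | right]; apply: val_inj. Qed.

(* For a Gram matrix G = C C^T this is |C_m - x C_i - y C_j|^2, the squared
   length of a residual of rows of C, expressed through G alone. *)
Definition residual_sq n (G : 'M[R]_n) m i j (x y : R) :=
  G m m - 2 * x * G m i - 2 * y * G m j + x ^+ 2 * G i i + y ^+ 2 * G j j
  + 2 * x * y * G i j.

Section GramMatrix.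
Variables (n k : nat) (C : 'M[R]_(n, k)).
Local Notation G := (C *m C^T).

Lemma gramE a b : G a b = \sum_l C a l * C b l.
Proof. by rewrite mxE; apply: eq_bigr => l _; rewrite mxE. Qed.

Lemma gram_sym : G^T = G.
Proof. by rewrite trmx_mul trmxK. Qed.

Lemma gram_ge0 a b : nonneg_mx C -> 0 <= G a b.
Proof. by move=> C_ge0; rewrite gramE sumr_ge0 // => l _; rewrite mulr_ge0. Qed.

Lemma rank_gram : (\rank G <= k)%N.
Proof. by rewrite (leq_trans (mxrankM_maxl _ _)) // rank_leq_col. Qed.

Lemma gram_residual m i j x y :
  residual_sq G m i j x y = \sum_l (C m l - x * C i l - y * C j l) ^+ 2.
Proof.
rewrite /residual_sq !gramE !mulr_sumr -!sumrN -!big_split /=.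
by apply: eq_bigr => l _; ring.
Qed.

Lemma residual_ge0 m i j x y : 0 <= residual_sq G m i j x y.
Proof. by rewrite gram_residual sumr_ge0 // => l _; apply: sqr_ge0. Qed.

Lemma residual_eq0 m i j x y : residual_sq G m i j x y = 0 ->
  forall l, C m l = x * C i l + y * C j l.
Proof.
rewrite gram_residual => /psumr_eq0P zero_sum l.
move/eqP: (zero_sum (fun l _ => sqr_ge0 _) l isT).
by rewrite sqrf_eq0 subr_eq0 subr_eq addrC => /eqP.
Qed.

Lemma gram_diag0 a : G a a = 0 -> forall l, C a l = 0.
Proof.
move=> Gaa0 l; rewrite (@residual_eq0 a a a 0 0) ?mul0r ?addr0 //.
by rewrite /residual_sq Gaa0; ring.
Qed.

Lemma gram_diag_ge0 a : 0 <= G a a.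
Proof. by have := residual_ge0 a a a 0 0; rewrite /residual_sq; lra. Qed.

Lemma gram_proj_residual a b : G a a != 0 ->
  residual_sq G b a a (G a b / G a a) 0 = G b b - G a b ^+ 2 / G a a.
Proof.
move=> Gaa0; have Gba : G b a = G a b by rewrite -{1}gram_sym mxE.
by rewrite /residual_sq Gba; field.
Qed.

Lemma gram_CS a b : G a b ^+ 2 <= G a a * G b b.
Proof.
have [Gaa0|Gaa_neq0] := eqVneq (G a a) 0.
  by rewrite Gaa0 mul0r gramE big1 ?expr0n // => l _; rewrite gram_diag0 ?mul0r.
have Gaa_gt0 : 0 < G a a by rewrite lt_def Gaa_neq0 gram_diag_ge0.
have := residual_ge0 b a a (G a b / G a a) 0.
by rewrite gram_proj_residual // subr_ge0 ler_pdivrMr // mulrC.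
Qed.

Lemma gram_CS_eq a b : 0 < G a a -> G a b ^+ 2 = G a a * G b b ->
  forall c, G b c = G a b / G a a * G a c.
Proof.
move=> Gaa_gt0 CS_eq c; have Gaa0 : G a a != 0 by rewrite gt_eqF.
have row_b := @residual_eq0 b a a (G a b / G a a) 0.
rewrite gram_proj_residual // CS_eq [G a a * _]mulrC mulfK // subrr in row_b.
set x := G a b / G a a in row_b *.
rewrite !gramE mulr_sumr; apply: eq_bigr => l _; rewrite row_b //; ring.
Qed.

Lemma gram_diag_support a : G a a != 0 -> exists l, C a l != 0.
Proof.
move=> Gaa0; apply/existsP; apply: contraR Gaa0 => /existsPn C_a0.
by rewrite gramE big1 // => l _; move/negbNE/eqP: (C_a0 l) => ->; rewrite mul0r.
Qed.

Lemma gram_diag_single a l0 : (forall l, l != l0 -> C a l = 0) -> 0 <= C a l0 ->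
  C a l0 = Num.sqrt (G a a).
Proof.
move=> C_a0 C_al0_ge0; rewrite gramE (bigD1 l0) //= big1 ?addr0.
  by rewrite -expr2 sqrtr_sqr ger0_norm.
by move=> l /C_a0 ->; rewrite mul0r.
Qed.

Lemma gram_diag_gt0 a : row a G != 0 -> 0 < G a a.
Proof.
move=> row_neq0; rewrite lt_def gram_diag_ge0 andbT; apply: contraNneq row_neq0 => Gaa0.
apply/eqP/rowP => b; rewrite mxE [RHS]mxE gramE big1 // => l _.
by rewrite (gram_diag0 Gaa0) mul0r.
Qed.

End GramMatrix.

Lemma sym_mxE n (A : 'M[R]_n) : A^T = A -> forall a b, A a b = A b a.
Proof. by move=> symA a b; rewrite -{1}symA mxE. Qed.

Lemma cramer2_trivial (a b u1 v1 u2 v2 : R) : u1 * v2 - v1 * u2 != 0 ->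
  a * u1 + b * v1 = 0 -> a * u2 + b * v2 = 0 -> a = 0 /\ b = 0.
Proof.
move=> det_neq0 eq1 eq2.
have a_det : a * (u1 * v2 - v1 * u2) = v2 * (a * u1 + b * v1) - v1 * (a * u2 + b * v2).
  by ring.
have b_det : b * (u1 * v2 - v1 * u2) = u1 * (a * u2 + b * v2) - u2 * (a * u1 + b * v1).
  by ring.
rewrite eq1 eq2 !mulr0 subrr in a_det b_det.
by split; apply/eqP; rewrite -(mulIr_eq0 _ (mulIf det_neq0)) ?a_det ?b_det.
Qed.

(* Rows p and q of a symmetric matrix with nonzero principal minor span all
   rows once the rank is at most 2; xcoef/ycoef are the Cramer coefficients. *)
Section TwoRows.
Variables (n : nat) (A : 'M[R]_n) (p q : 'I_n).

Definition minor2 := A p p * A q q - A p q ^+ 2.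
Definition xcoef m := (A m p * A q q - A m q * A p q) / minor2.
Definition ycoef m := (A m q * A p p - A m p * A p q) / minor2.

Hypotheses (symA : A^T = A) (minor_neq0 : minor2 != 0).

Lemma coef_unique m a b :
  A m p = a * A p p + b * A q p -> A m q = a * A p q + b * A q q ->
  xcoef m = a /\ ycoef m = b.
Proof.
move: minor_neq0; rewrite /xcoef /ycoef /minor2 => minor0 -> ->.
by rewrite [A q p]sym_mxE //; split; field.
Qed.

Lemma coef_p : xcoef p = 1 /\ ycoef p = 0.
Proof. by apply: coef_unique; ring. Qed.

Lemma coef_q : xcoef q = 0 /\ ycoef q = 1.
Proof. by apply: coef_unique; ring. Qed.

Hypothesis rankA : (\rank A <= 2)%N.

(* Rows p and q have rank 2 (the minor is invertible) and lie in the row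
   space of A, which has rank at most 2; so they span it. *)
Lemma rows_span m l : A m l = xcoef m * A p l + ycoef m * A q l.
Proof.
pose sel (k : 'I_2) := if k == 0 then p else q.
pose P := rowsub sel A.
pose inv_minor : 'M[R]_2 := minor2^-1 *: \matrix_(a, b)
  (if a == 0 then (if b == 0 then A q q else - A p q)
   else (if b == 0 then - A p q else A p p)).
have P_rinv : P *m (colsub sel 1%:M *m inv_minor) = 1%:M.
  rewrite mulmxA mulmx_colsub mulmx1; apply/matrixP => a b.
  rewrite mxE sum_ord2 !mxE; move: minor_neq0; rewrite /minor2 => minor0.
  by case: (ord2P a) => ->; case: (ord2P b) => -> /=; rewrite ?[A q p]sym_mxE //; field.
have rankP : \rank P = 2%N.
  apply/eqP; rewrite eqn_leq rank_leq_row -{1}(mxrank1 R 2) -P_rinv.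
  exact: mxrankM_maxl.
have A_sub : (A <= P)%MS.
  by rewrite -(geq_leqif (mxrank_leqif_sup (rowsub_sub sel A))) rankP.
have /submxP [D rowmE] := submx_trans (row_sub m A) A_sub.
have rowm l' : A m l' = D 0 0 * A p l' + D 0 1 * A q l'.
  by have := congr1 (fun M : 'M[R]_(1, n) => M 0 l') rowmE; rewrite !mxE sum_ord2 !mxE.
by have [-> ->] := coef_unique (rowm p) (rowm q); apply: rowm.
Qed.

(* The same relation holds for the rows of every factor C with A = C C^T,
   since the corresponding residuals have length zero. *)
Lemma factor_rows_span k (C : 'M[R]_(n, k)) : A = C *m C^T ->
  forall m l, C m l = xcoef m * C p l + ycoef m * C q l.
Proof.
move=> A_gram m; apply: residual_eq0; rewrite -A_gram.
rewrite /residual_sq (rows_span m m) [A p m]sym_mxE // [A q m]sym_mxE //.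
rewrite (rows_span m p) (rows_span m q) [A q p]sym_mxE //; ring.
Qed.

Definition factors_minor (L : 'M[R]_2) :=
  [/\ L 0 0 ^+ 2 + L 0 1 ^+ 2 = A p p, L 0 0 * L 1 0 + L 0 1 * L 1 1 = A p q
    & L 1 0 ^+ 2 + L 1 1 ^+ 2 = A q q].

Definition lift_factor (L : 'M[R]_2) : 'M[R]_(n, 2) :=
  \matrix_(m, k) (xcoef m * L 0 k + ycoef m * L 1 k).

Lemma lift_factor_p (L : 'M[R]_2) k : lift_factor L p k = L 0 k.
Proof. by have [xp yp] := coef_p; rewrite mxE xp yp; ring. Qed.

Lemma lift_factor_q (L : 'M[R]_2) k : lift_factor L q k = L 1 k.
Proof. by have [xq yq] := coef_q; rewrite mxE xq yq; ring. Qed.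

Lemma lift_factor_gram (L : 'M[R]_2) :
  factors_minor L -> A = lift_factor L *m (lift_factor L)^T.
Proof.
move=> [Lpp Lpq Lqq]; apply/matrixP => m l; rewrite gramE sum_ord2 !mxE.
rewrite rows_span [A p l]sym_mxE // [A q l]sym_mxE // (rows_span l p) (rows_span l q).
by rewrite [A q p]sym_mxE // -Lpp -Lpq -Lqq; ring.
Qed.

Lemma lift_factor_indep (L : 'M[R]_2) : L 0 0 * L 1 1 - L 0 1 * L 1 0 != 0 ->
  pairwise_lin_indep_cols (lift_factor L).
Proof.
move=> detL j1 j2 j12 a b comb0.
have comb_at m : a * lift_factor L m j1 + b * lift_factor L m j2 = 0.
  by have := congr1 (fun M : 'M[R]_(n, 1) => M m 0) comb0; rewrite !mxE.
have := comb_at p; have := comb_at q; rewrite !lift_factor_p !lift_factor_q.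
case: (ord2P j1) j12 => ->; case: (ord2P j2) => -> // _ eq_q eq_p.
  exact: cramer2_trivial eq_p eq_q.
by apply: cramer2_trivial eq_p eq_q; rewrite -oppr_eq0 opprB.
Qed.

Lemma lift_factor_ge0 (L : 'M[R]_2) :
  (forall m, 0 <= xcoef m) -> (forall m, 0 <= ycoef m) ->
  nonneg_mx L -> nonneg_mx (lift_factor L).
Proof. by move=> x_ge0 y_ge0 L_ge0 m k; rewrite mxE addr_ge0 // mulr_ge0. Qed.

Lemma lift_factor_cp (L : 'M[R]_2) :
  factors_minor L -> L 0 0 * L 1 1 - L 0 1 * L 1 0 != 0 ->
  (forall m, 0 <= xcoef m) -> (forall m, 0 <= ycoef m) -> nonneg_mx L ->
  cp_factorization A (lift_factor L).
Proof.
move=> LL detL x_ge0 y_ge0 L_ge0; split; first exact: lift_factor_ge0.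
  exact: lift_factor_gram.
exact: lift_factor_indep.
Qed.

End TwoRows.

Lemma ycoef_swap n (A : 'M[R]_n) :
  A^T = A -> forall p q m, ycoef A p q m = xcoef A q p m.
Proof.
move=> symA p q m; rewrite /ycoef /xcoef /minor2 [A q p]sym_mxE // [A q q * _]mulrC.
by congr (_ / _); ring.
Qed.

Lemma minor2_swap n (A : 'M[R]_n) :
  A^T = A -> forall p q, minor2 A q p = minor2 A p q.
Proof. by move=> symA p q; rewrite /minor2 [A q p]sym_mxE // mulrC. Qed.

(* Rational parametrization of the unit circle: (rcos u, rsin u) is the point
   at angle t with tan (t / 2) = u; for 0 <= u <= 1 it is in the first
   quadrant. *)
Definition rcos (u : R) := (1 - u ^+ 2) / (1 + u ^+ 2).
Definition rsin (u : R) := 2 * u / (1 + u ^+ 2).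

Lemma rot_denom_gt0 (u : R) : 0 < 1 + u ^+ 2.
Proof. by have := sqr_ge0 u; lra. Qed.

Lemma rcos_rsin (u : R) : rcos u ^+ 2 + rsin u ^+ 2 = 1.
Proof. by rewrite /rcos /rsin; field; rewrite gt_eqF ?rot_denom_gt0. Qed.

Lemma rcos_ge0 (u : R) : 0 <= u <= 1 -> 0 <= rcos u.
Proof.
move=> /andP[u_ge0 u_le1]; rewrite /rcos divr_ge0 ?subr_ge0 ?expr_le1 //.
exact/ltW/rot_denom_gt0.
Qed.

Lemma rsin_ge0 (u : R) : 0 <= u -> 0 <= rsin u.
Proof.
by move=> u_ge0; rewrite /rsin divr_ge0 ?mulr_ge0 //; exact/ltW/rot_denom_gt0.
Qed.

Lemma rcos_inj (u v : R) : 0 <= u -> 0 <= v -> rcos u = rcos v -> u = v.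
Proof.
move=> u_ge0 v_ge0; rewrite /rcos => /eqP.
have [du dv] := (rot_denom_gt0 u, rot_denom_gt0 v).
rewrite eqr_div ?(gt_eqF du) ?(gt_eqF dv) // => /eqP cross.
have /eqP : u ^+ 2 = v ^+ 2 by lra.
by rewrite eqrXn2 // => /eqP.
Qed.

Lemma rsin_lt_rcos (u v : R) :
  0 <= u <= 1 / 4 -> 0 <= v <= 1 / 4 -> rsin u < rcos v.
Proof.
move=> /andP[u_ge0 u_le] /andP[v_ge0 v_le].
have sin_le : rsin u <= 1 / 2.
  by rewrite /rsin ler_pdivrMr ?rot_denom_gt0 //; nra.
have cos_gt : 1 / 2 < rcos v.
  by rewrite /rcos ltr_pdivlMr ?rot_denom_gt0 //; nra.
exact: le_lt_trans sin_le cos_gt.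
Qed.

Lemma rot_slope (r t u : R) : 0 < r -> 0 < t -> 0 <= u ->
  u * (4 * (t + r)) <= r -> t * rsin u <= r * rcos u.
Proof.
move=> r_gt0 t_gt0 u_ge0 u_small; have u_le : u <= 1 / 4 by nra.
have := rot_denom_gt0 u => den_gt0.
rewrite /rsin /rcos !mulrA ler_pdivrMr // divfK ?gt_eqF //; nra.
Qed.

(* The Cholesky factor [chol11 0; chol21 chol22] of the minor on rows p, q,
   composed with the rotation of parameter u, factors the minor for all u. *)
Section CholeskyRotation.
Variables (n : nat) (A : 'M[R]_n) (p q : 'I_n).

Definition chol11 := Num.sqrt (A p p).
Definition chol21 := A p q / chol11.
Definition chol22 := Num.sqrt (A q q - chol21 ^+ 2).

Definition chol_rot (u : R) : 'M[R]_2 := \matrix_(a, b)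
  (if a == 0 then (if b == 0 then chol11 * rcos u else chol11 * rsin u)
   else (if b == 0 then chol21 * rcos u - chol22 * rsin u
         else chol21 * rsin u + chol22 * rcos u)).

Hypotheses (App_gt0 : 0 < A p p) (minor_gt0 : 0 < minor2 A p q).

Lemma chol11_sq : chol11 ^+ 2 = A p p.
Proof. by rewrite sqr_sqrtr // ltW. Qed.

Lemma chol11_gt0 : 0 < chol11.
Proof. by rewrite sqrtr_gt0. Qed.

Lemma chol22_sq : chol22 ^+ 2 = minor2 A p q / A p p.
Proof.
have schur : A q q - chol21 ^+ 2 = minor2 A p q / A p p.
  rewrite /chol21 /minor2 -chol11_sq; field; exact: lt0r_neq0 chol11_gt0.
by rewrite /chol22 schur sqr_sqrtr // divr_ge0 // ltW.
Qed.

Lemma chol22_gt0 : 0 < chol22.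
Proof.
rewrite lt_def sqrtr_ge0 andbT -sqrf_eq0 chol22_sq.
by rewrite mulf_neq0 ?invr_eq0 ?gt_eqF.
Qed.

Lemma chol_rot_factors (u : R) : factors_minor A p q (chol_rot u).
Proof.
have c2s2 := rcos_rsin u; have s11 := chol11_sq; have s22 := chol22_sq.
have c21 : chol21 * chol11 = A p q by rewrite /chol21 divfK ?gt_eqF ?chol11_gt0.
rewrite /factors_minor !mxE /=; split.
- by rewrite -s11 -[RHS]mulr1 -c2s2; ring.
- by rewrite -c21 -[RHS]mulr1 -c2s2; ring.
have -> : A q q = chol21 ^+ 2 + chol22 ^+ 2.
  by rewrite s22 /chol21 /minor2 -s11; field; exact: lt0r_neq0 chol11_gt0.
by rewrite -[RHS]mulr1 -c2s2; ring.
Qed.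

Lemma chol_rot_det (u : R) :
  chol_rot u 0 0 * chol_rot u 1 1 - chol_rot u 0 1 * chol_rot u 1 0 != 0.
Proof.
rewrite !mxE /=; have -> : chol11 * rcos u * (chol21 * rsin u + chol22 * rcos u)
  - chol11 * rsin u * (chol21 * rcos u - chol22 * rsin u)
  = chol11 * chol22 * (rcos u ^+ 2 + rsin u ^+ 2) by ring.
by rewrite rcos_rsin mulr1 mulf_neq0 ?gt_eqF ?chol11_gt0 ?chol22_gt0.
Qed.

Lemma chol_rot_ge0 (u : R) : 0 <= u <= 1 -> 0 <= A p q ->
  chol22 * rsin u <= chol21 * rcos u -> nonneg_mx (chol_rot u).
Proof.
move=> u01 Apq_ge0 slope a b.
have [c_ge0 s_ge0] := (rcos_ge0 u01, rsin_ge0 (andP u01).1).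
have c11_ge0 : 0 <= chol11 by rewrite sqrtr_ge0.
have c22_ge0 : 0 <= chol22 by rewrite sqrtr_ge0.
have c21_ge0 : 0 <= chol21 by rewrite divr_ge0.
rewrite mxE; case: (ord2P a) => ->; case: (ord2P b) => -> /=.
- exact: mulr_ge0.
- exact: mulr_ge0.
- by rewrite subr_ge0.
- exact: addr_ge0 (mulr_ge0 _ _) (mulr_ge0 _ _).
Qed.

End CholeskyRotation.

Lemma mul_perm_mxE n k (M : 'M[R]_(n, k)) (s : 'S_k) i j :
  (M *m perm_mx s) i j = M i ((s^-1)%g j).
Proof. by rewrite -[s in perm_mx s]invgK -col_permE mxE. Qed.

Lemma cp_fact_eqP n k (B C : 'M[R]_(n, k)) :
  cp_fact_eq B C <-> exists s : 'S_k, C = B *m perm_mx s.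
Proof.
split=> [[e [P [/is_perm_mxP [s ->] ->]]] | [s ->]].
  by exists s; rewrite (eq_irrelevance e erefl) castmx_id.
by exists erefl, (perm_mx s); rewrite castmx_id perm_mx_is_perm.
Qed.

Lemma indep_cols_proportional n k (C : 'M[R]_(n, k)) (v : 'I_n -> R)
    (l l' : 'I_k) a b :
  pairwise_lin_indep_cols C -> l != l' ->
  (forall m, C m l = a * v m) -> (forall m, C m l' = b * v m) -> a = 0 /\ b = 0.
Proof.
move=> C_indep ll' col_l col_l'.
have [b0 a0] : b = 0 /\ - a = 0.
  apply: (C_indep _ _ ll'); apply/matrixP => m z.
  by rewrite !mxE col_l col_l'; ring.
by split=> //; apply/eqP; rewrite -oppr_eq0 a0.
Qed.

Lemma cp_fact_eq_two_cols n k (B : 'M[R]_(n, 2)) (C : 'M[R]_(n, k)) l1 l2 :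
  l1 != l2 -> (forall l, l = l1 \/ l = l2) ->
  (forall m, C m l1 = B m 0) -> (forall m, C m l2 = B m 1) -> cp_fact_eq B C.
Proof.
move=> l12 cols col1 col2.
have k_le2 : (k <= 2)%N.
  have card2 : #|[set l1; l2]| = 2%N by rewrite cards2 l12.
  rewrite -[k]card_ord -card2 subset_leq_card //.
  by apply/subsetP => l _; rewrite !inE; case: (cols l) => ->; rewrite eqxx ?orbT.
have k_gt1 : (1 < k)%N by rewrite -[k]card_ord; apply/card_gt1P; exists l1, l2.
have k2 : k = 2%N by apply/eqP; rewrite eqn_leq k_le2.
subst k; apply/cp_fact_eqP.
case: (ord2P l1) l12 col1 col2 => ->; case: (ord2P l2) => -> // _ col1 col2.
  exists 1%g; apply/matrixP => m z; rewrite mul_perm_mxE invg1 perm1.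
  by case: (ord2P z) => ->.
exists (tperm 0 1); apply/matrixP => m z; rewrite mul_perm_mxE tpermV.
by case: (ord2P z) => ->; rewrite ?tpermL ?tpermR.
Qed.

Section DisjointSupports.
Variables (n k : nat) (C : 'M[R]_(n, k)) (p q : 'I_n) (x y : 'I_n -> R).
Hypotheses (C_indep : pairwise_lin_indep_cols C)
  (C_decomp : forall m l, C m l = C p l * x m + C q l * y m).

(* All columns of C vanishing at q are multiples of x, so by pairwise
   independence at most one of them is nonzero. *)
Lemma col_vanishing_unique l l' :
  C q l = 0 -> C q l' = 0 -> C p l' != 0 -> l = l'.
Proof.
move=> Cql Cql' Cpl'; apply/eqP; apply: contraNT Cpl' => ll'.
have [_ -> //] : C p l = 0 /\ C p l' = 0.
by apply: (indep_cols_proportional (v := x) C_indep ll') => m;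
  rewrite C_decomp ?Cql ?Cql' mul0r addr0.
Qed.

End DisjointSupports.

Section ZeroEntry.
Variables (n : nat) (A : 'M[R]_n) (p q : 'I_n).
Hypotheses (symA : A^T = A) (A_ge0 : forall a b, 0 <= A a b).
Hypothesis rankA : (\rank A <= 2)%N.
Hypotheses (Apq0 : A p q = 0) (App_gt0 : 0 < A p p) (Aqq_gt0 : 0 < A q q).

Lemma zero_minor_gt0 : 0 < minor2 A p q.
Proof. by rewrite /minor2 Apq0 expr0n subr0 mulr_gt0. Qed.

Let minor_neq0 : minor2 A p q != 0. Proof. exact: lt0r_neq0 zero_minor_gt0. Qed.

Lemma zero_coef_ge0 m : 0 <= xcoef A p q m /\ 0 <= ycoef A p q m.
Proof.
rewrite /xcoef /ycoef Apq0 !mulr0 !subr0.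
have minor_ge0 := ltW zero_minor_gt0.
by split; apply: divr_ge0 minor_ge0; apply: mulr_ge0 => //; apply: ltW.
Qed.

Lemma zero_chol21 : chol21 A p q = 0.
Proof. by rewrite /chol21 Apq0 mul0r. Qed.

(* At angle 0 the rotated Cholesky factor is diagonal, so the canonical
   factorization has the columns sqrt(a_pp) x and sqrt(a_qq) y. *)
Definition zero_factor := lift_factor A p q (chol_rot A p q 0).

Lemma zero_chol22 : chol22 A p q = Num.sqrt (A q q).
Proof. by rewrite /chol22 zero_chol21 expr0n subr0. Qed.

Lemma zero_factorE m :
  zero_factor m 0 = chol11 A p * xcoef A p q m /\
  zero_factor m 1 = chol22 A p q * ycoef A p q m.
Proof.
rewrite !mxE /= zero_chol21 /rcos /rsin expr0n /= !subr0 !addr0 !mulr0 !mul0r.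
by rewrite divr1; split; ring.
Qed.

Lemma zero_factor_cp : cp_factorization A zero_factor.
Proof.
apply: (lift_factor_cp symA minor_neq0 rankA).
- exact: (chol_rot_factors App_gt0 zero_minor_gt0 0).
- exact: (chol_rot_det App_gt0 zero_minor_gt0 0).
- by move=> m; have [] := zero_coef_ge0 m.
- by move=> m; have [] := zero_coef_ge0 m.
apply: chol_rot_ge0; rewrite ?lexx ?ler01 ?A_ge0 //.
by rewrite zero_chol21 /rsin !(mulr0, mul0r).
Qed.

Section AnyFactorization.
Variables (k : nat) (C : 'M[R]_(n, k)).
Hypothesis C_cp : cp_factorization A C.

(* Rows p and q of C are nonnegative and orthogonal: disjoint supports. *)
Lemma zero_supports_disjoint l : C p l * C q l = 0.
Proof.
have [C_ge0 A_gram _] := C_cp.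
have sum0 : \sum_l C p l * C q l = 0 by rewrite -gramE -A_gram.
by move/psumr_eq0P: sum0 => /(_ (fun l _ => mulr_ge0 (C_ge0 _ _) (C_ge0 _ _))) ->.
Qed.

Lemma zero_col_decomp m l :
  C m l = C p l * xcoef A p q m + C q l * ycoef A p q m.
Proof.
have [_ A_gram _] := C_cp.
by rewrite (factor_rows_span symA minor_neq0 rankA A_gram) mulrC [C q l * _]mulrC.
Qed.

Lemma zero_support_p l : C p l != 0 -> C q l = 0.
Proof.
move=> Cpl; apply/eqP; move: (zero_supports_disjoint l) => /eqP.
by rewrite mulf_eq0 (negbTE Cpl).
Qed.

Lemma zero_support_q l : C q l != 0 -> C p l = 0.
Proof.
move=> Cql; apply/eqP; move: (zero_supports_disjoint l) => /eqP.
by rewrite mulf_eq0 (negbTE Cql) orbF.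
Qed.

Lemma zero_two_columns : exists l1 l2,
  [/\ l1 != l2, forall l, l = l1 \/ l = l2, C p l1 != 0 & C q l2 != 0].
Proof.
have [_ A_gram C_indep] := C_cp.
have unique_p := col_vanishing_unique C_indep zero_col_decomp.
have unique_q := col_vanishing_unique C_indep
  (fun m l => etrans (zero_col_decomp m l) (addrC _ _)).
have [l1 Cpl1] : exists l, C p l != 0.
  by apply: gram_diag_support; rewrite -A_gram gt_eqF.
have [l2 Cql2] : exists l, C q l != 0.
  by apply: gram_diag_support; rewrite -A_gram gt_eqF.
exists l1, l2; split=> //.
  by apply: contraNneq Cql2 => <-; rewrite zero_support_p.
move=> l; have [Cql | Cql] := eqVneq (C q l) 0.
  by left; apply: unique_p Cql (zero_support_p Cpl1) Cpl1.
by right; apply: unique_q (zero_support_q Cql) (zero_support_q Cql2) Cql2.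
Qed.

Lemma zero_factor_unique : cp_fact_eq zero_factor C.
Proof.
have [C_ge0 A_gram _] := C_cp.
have [l1 [l2 [l12 cover Cpl1 Cql2]]] := zero_two_columns.
have Cpl1E : C p l1 = chol11 A p.
  rewrite /chol11 A_gram; apply: gram_diag_single => // l.
  by case: (cover l) => [-> | -> _]; [rewrite eqxx | exact: zero_support_q].
have Cql2E : C q l2 = chol22 A p q.
  rewrite zero_chol22 A_gram; apply: gram_diag_single => // l.
  by case: (cover l) => [-> _ | ->]; [exact: zero_support_p | rewrite eqxx].
apply: (cp_fact_eq_two_cols l12 cover) => m.
  by rewrite (zero_factorE m).1 zero_col_decomp zero_support_p // Cpl1E mul0r addr0 mulrC.
by rewrite (zero_factorE m).2 zero_col_decomp zero_support_q // Cql2E mul0r add0r mulrC.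
Qed.

End AnyFactorization.

Lemma zero_entry_unique : unique_cp_factorization A.
Proof.
exists 2%N, zero_factor; split; first exact: zero_factor_cp.
by move=> k C; apply: zero_factor_unique.
Qed.

End ZeroEntry.

Lemma exists_other n (a : 'I_n) : (1 < n)%N -> exists b, a != b.
Proof.
rewrite -[n in (1 < n)%N]card_ord => /card_gt1P [x [y [_ _ xy]]].
by case: (eqVneq a x) => [-> | ax]; [exists y | exists x].
Qed.

Lemma rank_le1_of_rows n (A : 'M[R]_n) p (w : 'I_n -> R) :
  (forall m c, A m c = w m * A p c) -> (\rank A <= 1)%N.
Proof.
move=> rowsE; have -> : A = \col_m w m *m row p A.
  by apply/matrixP => m c; rewrite mxE big_ord1 !mxE rowsE.
by rewrite (leq_trans (mxrankM_maxr _ _)) // rank_leq_row.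
Qed.

Section PositiveEntries.
Variables (n k0 : nat) (A : 'M[R]_n) (B0 : 'M[R]_(n, k0)).
Hypotheses (B0_ge0 : nonneg_mx B0) (A_gram : A = B0 *m B0^T).
Hypothesis rankA : \rank A = 2%N.
Hypothesis offdiag : forall i j, i != j -> A i j != 0.

Let symA : A^T = A. Proof. by rewrite A_gram gram_sym. Qed.
Let rankA_le2 : (\rank A <= 2)%N. Proof. by rewrite rankA. Qed.
Let A_ge0 a b : 0 <= A a b. Proof. by rewrite A_gram gram_ge0. Qed.
Let A_CS a b : A a b ^+ 2 <= A a a * A b b. Proof. by rewrite A_gram gram_CS. Qed.

(* A zero diagonal entry would force a zero row, hence a zero off-diagonal
   entry, as n >= rank A = 2. *)
Lemma pos_diag_gt0 a : 0 < A a a.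
Proof.
have n_gt1 : (1 < n)%N by rewrite -rankA rank_leq_row.
have [b ab] := exists_other a n_gt1.
rewrite lt_def A_ge0 andbT; apply: contraNneq (offdiag ab) => Aaa0.
by rewrite A_gram gramE big1 // => l _; rewrite gram_diag0 -?A_gram // mul0r.
Qed.

Lemma pos_entry_gt0 a b : 0 < A a b.
Proof.
by have [-> | ab] := eqVneq a b; rewrite ?pos_diag_gt0 // lt_def offdiag ?A_ge0.
Qed.

(* The squared cosine of the angle between the rows of a Gram factor. *)
Definition cos2 i j := A i j ^+ 2 / (A i i * A j j).

Lemma cos2_le i j i' j' : (cos2 i j <= cos2 i' j') =
  (A i j ^+ 2 * (A i' i' * A j' j') <= A i' j' ^+ 2 * (A i i * A j j)).
Proof.
rewrite /cos2 ler_pdivrMr ?mulr_gt0 ?pos_diag_gt0 // mulrAC.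
by rewrite ler_pdivlMr ?mulr_gt0 ?pos_diag_gt0.
Qed.

Lemma extremal_pair :
  exists p q, p != q /\ forall i j, i != j -> cos2 p q <= cos2 i j.
Proof.
have n_gt1 : (1 < n)%N by rewrite -rankA rank_leq_row.
have [a [b ab]] : exists a b : 'I_n, a != b.
  by have [b ab] := exists_other (Ordinal n_gt1) n_gt1; exists (Ordinal n_gt1), b.
pose P := [pred ij : 'I_n * 'I_n | ij.1 != ij.2].
have [[p q] /= pq pq_min] := @real_arg_minP _ _ (a, b) P (fun ij => cos2 ij.1 ij.2) ab
  (fun _ _ => num_real _).
by exists p, q; split=> // i j ij; apply: (pq_min (i, j)).
Qed.

Lemma cos2_sym i j : cos2 i j = cos2 j i.
Proof. by rewrite /cos2 [A i j](sym_mxE symA) [A i i * _]mulrC. Qed.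

Lemma extremal_cross p q m : (forall i j, i != j -> cos2 p q <= cos2 i j) ->
  A p q ^+ 2 * A m m <= A m p ^+ 2 * A q q.
Proof.
move=> pq_min; have App_gt0 := pos_diag_gt0 p.
rewrite -(ler_pM2l App_gt0) mulrCA [A p p * (_ * A q q)]mulrCA.
have [-> | mp] := eqVneq m p.
  by rewrite -expr2 [X in _ <= X]mulrC ler_pM2r ?exprn_gt0 // A_CS.
by have := pq_min _ _ mp; rewrite cos2_le [A m m * _]mulrC.
Qed.

Lemma cross_xcoef_ge0 p q m : 0 < minor2 A p q ->
  A p q ^+ 2 * A m m <= A m p ^+ 2 * A q q -> 0 <= xcoef A p q m.
Proof.
move=> minor_gt0 cross; rewrite /xcoef; apply: divr_ge0 (ltW minor_gt0).
rewrite subr_ge0 -ler_sqr ?nnegrE ?mulr_ge0 // !exprMn.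
apply: le_trans (_ : A m m * A q q * A p q ^+ 2 <= _).
  by rewrite ler_pM2r ?A_CS // exprn_gt0 // pos_entry_gt0.
have -> : A m m * A q q * A p q ^+ 2 = A q q * (A p q ^+ 2 * A m m) by ring.
have -> : A m p ^+ 2 * A q q ^+ 2 = A q q * (A m p ^+ 2 * A q q) by ring.
by rewrite ler_pM2l ?pos_diag_gt0.
Qed.

Section ExtremalPair.
Variables (p q : 'I_n).
Hypothesis pq_min : forall i j, i != j -> cos2 p q <= cos2 i j.

(* Rows p, q are not parallel, else all rows would be, and rank A <= 1. *)
Lemma extremal_minor_gt0 : 0 < minor2 A p q.
Proof.
rewrite lt_def subr_ge0 A_CS andbT subr_eq0; apply/negP => /eqP CS_eq.
have App_gt0 := pos_diag_gt0 p.
have row_prop m c : A m c = A p m / A p p * A p c.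
  have CS_eq_m : A p m ^+ 2 = A p p * A m m.
    apply/eqP; rewrite eq_le A_CS /=.
    have := extremal_cross m pq_min; rewrite -CS_eq [A m p](sym_mxE symA) mulrAC.
    by rewrite ler_pM2r ?pos_diag_gt0.
  by move: App_gt0 CS_eq_m; rewrite A_gram => Gpp_gt0 Gpm_eq; apply: gram_CS_eq.
by have := rank_le1_of_rows row_prop; rewrite rankA.
Qed.

Lemma extremal_coef_ge0 m : 0 <= xcoef A p q m /\ 0 <= ycoef A p q m.
Proof.
split; first exact: cross_xcoef_ge0 extremal_minor_gt0 (extremal_cross m pq_min).
rewrite (ycoef_swap symA); apply: cross_xcoef_ge0.
  by rewrite (minor2_swap symA) extremal_minor_gt0.
by apply: extremal_cross => i j ij; rewrite cos2_sym pq_min.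
Qed.

Lemma extremal_chol21_gt0 : 0 < chol21 A p q.
Proof. by rewrite divr_gt0 ?pos_entry_gt0 ?chol11_gt0 ?pos_diag_gt0. Qed.

Lemma extremal_chol22_gt0 : 0 < chol22 A p q.
Proof. exact: chol22_gt0 (pos_diag_gt0 p) extremal_minor_gt0. Qed.

(* Rotation angles small enough to keep the rotated factor nonnegative. *)
Definition angle_scale := chol21 A p q / (4 * (chol22 A p q + chol21 A p q)).
Definition angle (j : nat) := angle_scale / j.+1%:R.

Lemma angle_scale_gt0 : 0 < angle_scale.
Proof.
have [c21_gt0 c22_gt0] := (extremal_chol21_gt0, extremal_chol22_gt0).
by rewrite divr_gt0 // mulr_gt0 // addr_gt0.
Qed.

Lemma angle_bounds j : 0 <= angle j /\
  angle j * (4 * (chol22 A p q + chol21 A p q)) <= chol21 A p q.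
Proof.
have [c21_gt0 c22_gt0] := (extremal_chol21_gt0, extremal_chol22_gt0).
split; first exact: divr_ge0 (ltW angle_scale_gt0) (ler0n _ _).
rewrite /angle /angle_scale mulrAC divfK ?gt_eqF ?mulr_gt0 ?addr_gt0 //.
by rewrite ler_pdivrMr ?ltr0Sn // ler_pMr // ler1n.
Qed.

Lemma angle_inj : injective angle.
Proof.
move=> j1 j2 /(mulfI (lt0r_neq0 angle_scale_gt0))/invr_inj/eqP.
by rewrite eqr_nat eqSS => /eqP.
Qed.

(* In particular the angles are at most 1/4, where rsin < rcos. *)
Lemma angle_le j : 0 <= angle j <= 1 / 4.
Proof.
have [u_ge0 u_small] := angle_bounds j.
have [c21_gt0 c22_gt0] := (extremal_chol21_gt0, extremal_chol22_gt0).
by rewrite u_ge0 /=; nra.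
Qed.

Definition family j := lift_factor A p q (chol_rot A p q (angle j)).

Lemma family_cp j : cp_factorization A (family j).
Proof.
have [App_gt0 minor_gt0] := (pos_diag_gt0 p, extremal_minor_gt0).
have [u_ge0 u_small] := angle_bounds j.
apply: (lift_factor_cp symA (lt0r_neq0 minor_gt0) rankA_le2).
- exact: chol_rot_factors.
- exact: chol_rot_det.
- by move=> m; have [] := extremal_coef_ge0 m.
- by move=> m; have [] := extremal_coef_ge0 m.
apply: chol_rot_ge0; first by have /andP [? ?] := angle_le j; apply/andP; split; lra.
  exact: A_ge0.
by apply: rot_slope u_small; rewrite ?extremal_chol21_gt0 ?extremal_chol22_gt0.
Qed.

(* Two columns is minimal since the cp-rank is at least the rank. *)
Lemma family_minimal j : minimal_cp_factorization A (family j).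
Proof.
split; first exact: family_cp.
by move=> k C k_lt2 _ A_C; move: (rank_gram C); rewrite -A_C rankA leqNgt k_lt2.
Qed.

(* Row p of the family members is a scaled point on the circle, which
   distinguishes the angles even after swapping the two columns. *)
Lemma family_distinct j1 j2 : j1 <> j2 -> ~ cp_fact_eq (family j1) (family j2).
Proof.
move=> j12 /cp_fact_eqP [s /(congr1 (fun M : 'M[R]_(n, 2) => M p 0))].
have minor_neq0 := lt0r_neq0 extremal_minor_gt0.
have c11_neq0 := lt0r_neq0 (chol11_gt0 (pos_diag_gt0 p)).
rewrite mul_perm_mxE !(lift_factor_p symA minor_neq0).
case: (ord2P ((s^-1)%g 0)) => ->; rewrite !mxE /= => /(mulfI c11_neq0).
  by move/rcos_inj => /(_ (angle_bounds _).1 (angle_bounds _).1) /angle_inj /esym.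
move=> cos_sin; have := rsin_lt_rcos (angle_le j1) (angle_le j2).
by rewrite cos_sin ltxx.
Qed.

End ExtremalPair.

Lemma positive_infinitely_many : infinitely_many_minimal_cp A.
Proof.
have [p [q [_ pq_min]]] := extremal_pair.
exists 2%N, (family p q); split; first exact: family_minimal.
exact: family_distinct.
Qed.

End PositiveEntries.

Lemma sym_col_neq0 n (A : 'M[R]_n) j :
  A^T = A -> (col j A != 0) = (row j A != 0).
Proof. by move=> symA; rewrite -{1}symA -tr_row trmx_eq0. Qed.

(* In an irreducible matrix of size at least 2 every vertex has a neighbour,
   so every row is nonzero. *)
Lemma irreducible_row_neq0 n (A : 'M[R]_n) i : (1 < n)%N -> irreducible_mx A ->
  row i A != 0.
Proof.
move=> n_gt1 irrA; have [j ij] := exists_other i n_gt1.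
case/connectP: (irrA i j) => [[|x path_x] /= path_ij last_j].
  by rewrite last_j eqxx in ij.
move: path_ij; rewrite /mx_graph /= => /andP [/andP [_ Aix_neq0] _].
apply: contraNneq Aix_neq0 => rowi0.
by have := congr1 (fun M : 'M[R]_(1, n) => M 0 x) rowi0; rewrite !mxE => ->.
Qed.

Lemma infinite_not_unique n (A : 'M[R]_n) :
  infinitely_many_minimal_cp A -> ~ unique_cp_factorization A.
Proof.
move=> [k [f [f_min f_distinct]]] [k' [B [_ B_unique]]].
have [e _] := B_unique _ _ (f_min 0%N).1; subst k'.
have /cp_fact_eqP [s0 f0E] := B_unique _ _ (f_min 0%N).1.
have /cp_fact_eqP [s1 f1E] := B_unique _ _ (f_min 1%N).1.
apply: (f_distinct 0%N 1%N) => //; apply/cp_fact_eqP; exists (s0^-1 * s1)%g.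
by rewrite f1E f0E -mulmxA -perm_mxM mulKVg.
Qed.

End RankTwoCP.

Theorem corollary3p2 (R : realType) (n : nat) (A : 'M[R]_n) :
  A^T = A -> completely_positive A -> irreducible_mx A -> \rank A = 2%N ->
  (unique_cp_factorization A <->
     exists i j : 'I_n, [/\ i != j, A i j = 0, row i A != 0 & col j A != 0])
  /\
  ((forall i j : 'I_n, i != j -> A i j != 0) -> infinitely_many_minimal_cp A).
Proof.
move=> symA [k0 [B0 [B0_ge0 A_gram]]] irrA rankA.
have infinite := positive_infinitely_many B0_ge0 A_gram rankA.
have rankA_le2 : (\rank A <= 2)%N by rewrite rankA.
have A_ge0 a b : 0 <= A a b by rewrite A_gram gram_ge0.
have diag_gt0 a : row a A != 0 -> 0 < A a a by rewrite A_gram; apply: gram_diag_gt0.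
split=> //; split=> [uniqueA | [i [j [ij Aij0 rowi colj]]]]; last first.
  rewrite (sym_col_neq0 _ symA) in colj.
  exact: zero_entry_unique symA A_ge0 rankA_le2 Aij0 (diag_gt0 _ rowi) (diag_gt0 _ colj).
(* Uniqueness rules out the positive case, so some off-diagonal entry is 0;
   irreducibility makes its row and column nonzero. *)
have n_gt1 : (1 < n)%N by rewrite -rankA rank_leq_row.
case: (pickP [pred ij : 'I_n * 'I_n | (ij.1 != ij.2) && (A ij.1 ij.2 == 0)]).
  move=> [i j] /andP [/= ij /eqP Aij0]; exists i, j; split=> //.
    exact: irreducible_row_neq0.
  by rewrite (sym_col_neq0 _ symA) irreducible_row_neq0.
move=> no_zero; exfalso; apply: (infinite_not_unique _ uniqueA); apply: infinite.
by move=> i j ij; have := no_zero (i, j); rewrite /= ij => /negbT.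
Qed.
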